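(* In every approval-based SCV instance, every committee satisfying SW-JR also satisfies weak-SW-JR. Conversely, there exist an approval-based SCV instance and a committee that satisfies weak-SW-JR but not SW-JR.
   Context: An approval-based sub-committee voting (SCV) instance consists of a set of voters $N=\{1,\ldots,n\}$, a finite set of candidates $C$ partitioned into candidate subsets $C_1,\ldots,C_\ell$, positive integer quotas $k_j\le |C_j|$ with $k=\sum_{j=1}^\ell k_j$, and approval ballots $A_i\subseteq C$ for $i\in N$. A committee is a set $W\subseteq C$ with $|W\cap C_j|=k_j$ for every $j$. $W$ satisfies SW-JR if for every $X\subseteq N$ with $|X|\ge n/k$ and $|\bigcap_{i\in X}A_i|\ge 1$ we have $|W\cap \bigcup_{i\in X}A_i|\ge 1$. $W$ satisfies weak-SW-JR if for every $X\subseteq N$ with $|X|\ge n/k$ and $|(\bigcap_{i\in X}A_i)\cap C_j|\ge 1$ for all $j=1,\ldots,\ell$ we have $|W\cap \bigcup_{i\in X}A_i|\ge 1$. *)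

From mathcomp Require Import all_boot all_order all_algebra.
Set Implicit Arguments. Unset Strict Implicit. Unset Printing Implicit Defensive.
Import Order.TTheory GRing.Theory Num.Theory.

(* An approval-based SCV instance:
   - voters: the finite type V (N = V, n = #|V|),
   - candidates: the finite type C,
   - partition of C into C_1..C_l given by part : C -> 'I_l
     (C_j = [set c | part c == j]),
   - quotas q : 'I_l -> nat,
   - approval ballots A : V -> {set C}. *)

Definition subc (C : finType) (l : nat) (part : C -> 'I_l) (j : 'I_l) : {set C} :=
  [set c | part c == j].

Definition ktot (l : nat) (q : 'I_l -> nat) : nat := \sum_(j < l) q j.

Definition scv_instance (V C : finType) (l : nat) (part : C -> 'I_l)
  (q : 'I_l -> nat) (A : V -> {set C}) : Prop :=
  (0 < #|V|)%N /\ (0 < l)%N /\ forall j : 'I_l, (0 < q j)%N /\ (q j <= #|subc part j|)%N.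

Definition committee (C : finType) (l : nat) (part : C -> 'I_l)
  (q : 'I_l -> nat) (W : {set C}) : Prop :=
  forall j : 'I_l, #|W :&: subc part j| = q j.

Definition large (V : finType) (l : nat) (q : 'I_l -> nat) (X : {set V}) : Prop :=
  ((#|V|%:R / (ktot q)%:R : rat) <= #|X|%:R)%R.

Definition SW_JR (V C : finType) (l : nat) (part : C -> 'I_l)
  (q : 'I_l -> nat) (A : V -> {set C}) (W : {set C}) : Prop :=
  forall X : {set V}, large q X ->
    (1 <= #|\bigcap_(i in X) A i|)%N ->
    (1 <= #|W :&: \bigcup_(i in X) A i|)%N.

Definition weak_SW_JR (V C : finType) (l : nat) (part : C -> 'I_l)
  (q : 'I_l -> nat) (A : V -> {set C}) (W : {set C}) : Prop :=
  forall X : {set V}, large q X ->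
    (forall j : 'I_l, 1 <= #|(\bigcap_(i in X) A i) :&: subc part j|)%N ->
    (1 <= #|W :&: \bigcup_(i in X) A i|)%N.

From mathcomp Require Import all_boot all_order all_algebra.
Import Order.TTheory GRing.Theory Num.Theory.
Set Implicit Arguments. Unset Strict Implicit. Unset Printing Implicit Defensive.

(* A candidate approved by all of X and lying in some part is in particular
   commonly approved, so (as there is at least one part) the premise of
   weak-SW-JR implies that of SW-JR.  Conversely, if no voter approves a
   candidate of some part, the premise of weak-SW-JR never holds for a large
   group, so every committee satisfies it; a single voter approving only a
   candidate the committee leaves out then separates the two axioms. *)

Section Justification.
Variables (V C : finType) (l : nat) (part : C -> 'I_l) (q : 'I_l -> nat).
Implicit Types (A : V -> {set C}) (W : {set C}).

Lemma SW_JR_weak_SW_JR A W : (0 < l)%N ->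
  SW_JR part q A W -> weak_SW_JR part q A W.
Proof.
move=> l_gt0 jrW X largeX /(_ (Ordinal l_gt0)) common_in_part.
apply: jrW => //; exact: leq_trans common_in_part (subset_leq_card (subsetIl _ _)).
Qed.

Lemma scv_instance_ktot_gt0 {A} : scv_instance part q A -> (0 < ktot q)%N.
Proof.
move=> [_ [l_gt0 quota]]; rewrite /ktot (bigD1 (Ordinal l_gt0)) //=.
exact: leq_trans (quota _).1 (leq_addr _ _).
Qed.

(* Positivity matters: if [ktot q = 0], [n / k] is the junk value [0] and [set0] is large. *)
Lemma large_set0 {A} : scv_instance part q A -> ~ large q (set0 : {set V}).
Proof.
move=> inst; have k_gt0 := scv_instance_ktot_gt0 inst; case: inst => V_gt0 _.
by rewrite /large cards0 ler_pdivrMr ?ltr0n // mul0r lern0 eqn0Ngt V_gt0.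
Qed.

Lemma large_setT {A} : scv_instance part q A -> large q [set: V].
Proof.
move=> /scv_instance_ktot_gt0 k_gt0.
by rewrite /large cardsT ler_pdivrMr ?ltr0n // -natrM ler_nat leq_pmulr.
Qed.

Lemma weak_SW_JR_unapproved_part A W (j : 'I_l) :
  scv_instance part q A -> (forall i, [disjoint A i & subc part j]) ->
  weak_SW_JR part q A W.
Proof.
move=> inst j_unapproved X largeX /(_ j).
have [X0 | [i Xi]] := set_0Vmem X; first by move: largeX; rewrite X0 => /(large_set0 inst).
rewrite card_gt0 => /set0Pn[c /setIP[/bigcapP/(_ i Xi) Aic]].
by rewrite (disjointFr (j_unapproved i) Aic).
Qed.

Lemma not_SW_JR A W (c : C) : scv_instance part q A ->
  (forall i, c \in A i) -> (forall i, [disjoint W & A i]) -> ~ SW_JR part q A W.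
Proof.
move=> inst all_approve_c W_misses_ballots /(_ _ (large_setT inst)).
have common_c : (1 <= #|\bigcap_(i in [set: V]) A i|)%N.
  by rewrite card_gt0; apply/set0Pn; exists c; apply/bigcapP.
move=> /(_ common_c); rewrite card_gt0 => /set0Pn[d /setIP[Wd /bigcupP[i _ Aid]]].
by rewrite (disjointFr (W_misses_ballots i) Wd) in Aid.
Qed.

End Justification.

Definition ex_part (c : 'I_2 * bool) : 'I_2 := c.1.
Definition ex_quota (j : 'I_2) : nat := 1.
Definition ex_ballot (v : unit) : {set 'I_2 * bool} := [set (ord0, false)].
Definition ex_committee : {set 'I_2 * bool} := [set c | c.2].

Lemma ex_committee_part (j : 'I_2) :
  ex_committee :&: subc ex_part j = [set (j, true)].
Proof.
apply/setP => -[j' b]; rewrite !inE xpair_eqE andbC.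
by case: b; rewrite ?andbT ?andbF.
Qed.

Lemma ex_scv_instance : scv_instance ex_part ex_quota ex_ballot.
Proof.
split; first by rewrite card_unit.
split=> // j; split=> //; rewrite card_gt0; apply/set0Pn.
by exists (j, true); rewrite inE.
Qed.

Lemma ex_committee_committee : committee ex_part ex_quota ex_committee.
Proof. by move=> j; rewrite ex_committee_part cards1. Qed.

Lemma ex_ballot_unapproved_part i : [disjoint ex_ballot i & subc ex_part ord_max].
Proof. by apply/pred0P => -[j b]; rewrite !inE; case: eqP => // -[-> _]. Qed.

Lemma ex_committee_disjoint_ballot i : [disjoint ex_committee & ex_ballot i].
Proof. by apply/pred0P => -[j [] /=]; rewrite !inE ?xpair_eqE ?andbF. Qed.

Theorem mainTheorem3 :
  (forall (V C : finType) (l : nat) (part : C -> 'I_l) (q : 'I_l -> nat)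
          (A : V -> {set C}) (W : {set C}),
      scv_instance part q A -> committee part q W ->
      SW_JR part q A W -> weak_SW_JR part q A W) /\
  (exists (V C : finType) (l : nat) (part : C -> 'I_l) (q : 'I_l -> nat)
          (A : V -> {set C}) (W : {set C}),
      [/\ scv_instance part q A, committee part q W,
          weak_SW_JR part q A W & ~ SW_JR part q A W]).
Proof.
split=> [V C l part q A W [_ [l_gt0 _]] _ | ]; first exact: SW_JR_weak_SW_JR.
exists unit, _, 2, ex_part, ex_quota, ex_ballot, ex_committee.
split; [exact: ex_scv_instance | exact: ex_committee_committee | |].
- exact: weak_SW_JR_unapproved_part ex_scv_instance ex_ballot_unapproved_part.
- exact: not_SW_JR ex_scv_instance (fun=> set11 _) ex_committee_disjoint_ballot.
Qed.
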